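(* Let $G$ be a bridgeless cubic graph and let $H\subseteq G$ be an (induced) subgraph with $|\delta_G(H)|=6$. Then either $H$ has a perfect matching, or $H$ contains an independent set $S$ of vertices, each of valency $3$ in $H$, such that (i) every component of $H-S$ has an odd number of vertices, (ii) the number of components of $H-S$ with an odd number of vertices equals $|S|+2$, and (iii) $|\delta_G(L)|=3$ for each component $L$ of $H-S$.
   Context: Graphs may have multiple edges and loops. For a subgraph $H$ of $G$, $\delta_G(H)$ denotes the set of edges of $G$ with exactly one end in $V(H)$. *)

From mathcomp Require Import all_boot.
Set Implicit Arguments. Unset Strict Implicit. Unset Printing Implicit Defensive.

(* A finite multigraph (multiple edges and loops allowed): vertex type V,
   edge type E, each edge e has endpoints [src e] and [tgt e]
   (a loop has src e = tgt e). *)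
Section Multigraph.
Variables (V E : finType) (src tgt : E -> V).

Definition links (e : E) (x y : V) : bool :=
  ((src e == x) && (tgt e == y)) || ((src e == y) && (tgt e == x)).

(* degree of v in the subgraph induced by X (a loop counts twice) *)
Definition deg_in (X : {set V}) (v : V) : nat :=
  \sum_(e : E | (src e \in X) && (tgt e \in X)) ((src e == v) + (tgt e == v)).

Definition cubic : Prop := forall v : V, deg_in setT v = 3.

Definition adj_minus (e : E) : rel V :=
  fun x y => [exists f : E, (f != e) && links f x y].

Definition bridge (e : E) : bool := ~~ connect (adj_minus e) (src e) (tgt e).

Definition bridgeless : Prop := forall e : E, ~~ bridge e.

Definition cut (X : {set V}) : {set E} :=
  [set e | (src e \in X) != (tgt e \in X)].

Definition adj_in (Y : {set V}) : rel V :=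
  fun x y => (x \in Y) && (y \in Y) && [exists f : E, links f x y].

Definition comp_of (Y : {set V}) (v : V) : {set V} :=
  [set w in Y | connect (adj_in Y) v w].

Definition components (Y : {set V}) : {set {set V}} :=
  [set comp_of Y v | v in Y].

Definition has_perfect_matching (X : {set V}) : Prop :=
  exists M : {set E},
    (forall e, e \in M -> [/\ src e \in X, tgt e \in X & src e != tgt e]) /\
    (forall v, v \in X -> #|[set e in M | (src e == v) || (tgt e == v)]| = 1).

Definition independent (S : {set V}) : Prop :=
  forall e : E, ~~ ((src e \in S) && (tgt e \in S)).

End Multigraph.

(* If H has no perfect matching, Tutte's theorem yields a barrier S with more
   than |S| odd components in H - S; since |delta(H)| = 6 forces |H| to be
   even, there are at least |S| + 2 of them.  Take such an S of maximum size.
   Deleting one vertex of an even component would flip the parity of the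
   number of odd components and so create a larger barrier: every component
   is odd.  In a bridgeless cubic graph every odd set has at least 3 boundary
   edges, and the boundary edges of the components go either to S or out of H.
   Counting, 3 (|S| + 2) <= 3 |S| - e(S) + 6, so equality holds throughout:
   S is independent, no edge at S leaves H, there are exactly |S| + 2
   components and each has exactly 3 boundary edges.

   Tutte's theorem is proved as in Lovasz's argument: in an edge-maximal
   counterexample the universal vertices S split off components that are
   cliques (and then a matching is built by hand), unless some a - b - c is an
   induced path; then the perfect matchings of G + ac and G + bd can be
   switched along an alternating walk into a perfect matching of G. *)

From mathcomp Require Import all_boot zify.
From Stdlib Require Import Classical.
Set Implicit Arguments. Unset Strict Implicit. Unset Printing Implicit Defensive.

Lemma odd_sum (I : finType) (P : {set I}) (F : I -> nat) :
  odd (\sum_(i in P) F i) = odd #|[set i in P | odd (F i)]|.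
Proof.
rewrite -sum1_card big_mkcond [in RHS]big_mkcond /=.
apply: (big_ind2 (fun m n => odd m = odd n)) => // [m1 m2 n1 n2 e1 e2|i _].
  by rewrite !oddD e1 e2.
by rewrite inE; case: (i \in P); case: (boolP (odd (F i))) => //= /negbTE.
Qed.

Lemma disjointP (T : finType) (A B : {pred T}) :
  reflect (forall x, x \in A -> x \in B -> False) [disjoint A & B].
Proof.
apply: (iffP pred0P) => [AB x xA xB|AB x /=]; first by have := AB x; rewrite /= xA xB.
by apply/negbTE/negP => /andP[/AB].
Qed.

Lemma card_bigcup_disjoint (I T : finType) (P : {set I}) (F : I -> {set T}) :
  {in P &, forall i j, i != j -> [disjoint F i & F j]} ->
  #|\bigcup_(i in P) F i| = \sum_(i in P) #|F i|.
Proof.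
move=> disj; rewrite -sum1_card (eq_bigr (fun i => \sum_(x in F i) 1)) => [|i _].
  rewrite (exchange_big_dep (mem (\bigcup_(i in P) F i))) /= => [|i x iP xFi].
    apply: eq_bigr => x /bigcupP[i iP xFi]; rewrite (bigD1 i) ?iP //= big1 //.
    move=> j /andP[/andP[jP xFj] nji].
    by rewrite (disjointFl (disj j i jP iP nji) xFi) in xFj.
  by apply/bigcupP; exists i.
by rewrite sum1_card.
Qed.

Lemma connect_invariant (T : finType) (e : rel T) (P : pred T) x y :
  (forall u w, P u -> e u w -> P w) -> P x -> connect e x y -> P y.
Proof.
move=> inv Px /connectP[p ep ->]; elim: p x Px ep => //= z p IH x Px /andP[exz ep].
exact: IH (inv _ _ Px exz) ep.
Qed.

Lemma exists_injection (I T : finType) (A : {set I}) (B : {set T}) (y0 : T) :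
  #|A| <= #|B| ->
  exists2 f : I -> T, {in A, forall i, f i \in B} & {in A &, injective f}.
Proof.
move=> leAB; pose f i := nth y0 (enum B) (index i (enum A)).
have idx_lt i : i \in A -> index i (enum A) < size (enum B).
  by move=> iA; rewrite -cardE (leq_trans _ leAB) // cardE index_mem mem_enum.
exists f => [i iA|i j iA jA]; first by rewrite -mem_enum mem_nth ?idx_lt.
move/eqP; rewrite /f nth_uniq ?idx_lt ?enum_uniq // => /eqP eq_idx.
have jA' : j \in enum A by rewrite mem_enum.
by rewrite -(nth_index i jA') -eq_idx nth_index ?mem_enum.
Qed.

Section Components.
Variables (V : finType) (r : rel V).
Hypothesis r_sym : symmetric r.
Implicit Types (X Y S K : {set V}) (u v w : V).

Definition adj_on Y : rel V := fun x y => (x \in Y) && (y \in Y) && r x y.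
Definition comp Y v : {set V} := [set w in Y | connect (adj_on Y) v w].
Definition comps Y : {set {set V}} := [set comp Y v | v in Y].
Definition odd_comps Y : {set {set V}} := [set K in comps Y | odd #|K|].

Lemma adj_on_sym Y : symmetric (adj_on Y).
Proof. by move=> x y; rewrite /adj_on r_sym; case: (x \in Y); case: (y \in Y). Qed.

Lemma comp_sub Y v : comp Y v \subset Y.
Proof. by apply/subsetP=> w; rewrite inE => /andP[]. Qed.

Lemma mem_comp Y v : v \in Y -> v \in comp Y v.
Proof. by move=> vY; rewrite inE vY connect0. Qed.

Lemma comp_eq Y u v : u \in comp Y v -> comp Y u = comp Y v.
Proof.
rewrite inE => /andP[_ cvu]; apply/setP=> w; rewrite !inE.
by rewrite (same_connect (sym_connect_sym (adj_on_sym Y)) cvu).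
Qed.

Lemma comps_comp Y K u : K \in comps Y -> u \in K -> K = comp Y u.
Proof. by move=> /imsetP[v _ ->] /comp_eq->. Qed.

Lemma comps_sub Y K : K \in comps Y -> K \subset Y.
Proof. by move=> /imsetP[v _ ->]; apply: comp_sub. Qed.

Lemma comps_nonempty Y K : K \in comps Y -> exists u, u \in K.
Proof. by move=> /imsetP[v vY ->]; exists v; apply: mem_comp. Qed.

Lemma comps_closed Y K u w : K \in comps Y -> u \in K -> w \in Y -> r u w -> w \in K.
Proof.
move=> KY uK wY ruw; rewrite (comps_comp KY uK) inE wY connect1 //.
by rewrite /adj_on wY ruw (subsetP (comps_sub KY)).
Qed.

Lemma comps_partition Y : partition (comps Y) Y.
Proof.
apply/and3P; split.
- apply/eqP/setP=> u; apply/bigcupP/idP => [[K KY uK]|uY].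
    exact: subsetP (comps_sub KY) u uK.
  by exists (comp Y u); [apply: imset_f | apply: mem_comp].
- apply/trivIsetP => K K' KY K'Y; apply: contraR => /pred0Pn[u /andP[/= uK uK']].
  by rewrite (comps_comp KY uK) (comps_comp K'Y uK').
- by apply/imsetP=> -[v vY /setP/(_ v)]; rewrite mem_comp // inE.
Qed.

Lemma comps_disjoint Y K K' :
  K \in comps Y -> K' \in comps Y -> K != K' -> [disjoint K & K'].
Proof. exact/trivIsetP/partition_trivIset/comps_partition. Qed.

Lemma odd_card_comps Y : odd #|Y| = odd #|odd_comps Y|.
Proof. by rewrite (card_partition (comps_partition Y)) odd_sum. Qed.

Lemma odd_odd_comps_setD X S : ~~ odd #|X| -> S \subset X ->
  odd #|odd_comps (X :\: S)| = odd #|S|.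
Proof.
move=> evX SX; rewrite -odd_card_comps cardsD (setIidPr SX) oddB ?subset_leq_card //.
by rewrite (negbTE evX).
Qed.

Lemma comp_subset Y Y' v : Y' \subset Y -> comp Y' v \subset comp Y v.
Proof.
move=> sYY'; apply/subsetP => w; rewrite !inE => /andP[wY' cvw].
rewrite (subsetP sYY' _ wY'); apply: connect_sub cvw => x y /andP[/andP[xY yY] rxy].
by rewrite connect1 // /adj_on rxy !(subsetP sYY').
Qed.

Lemma comp_restrict Y Y' v : Y' \subset Y -> v \in Y -> comp Y v \subset Y' ->
  comp Y' v = comp Y v.
Proof.
move=> sY'Y vY sKY'; apply/eqP; rewrite eqEsubset comp_subset //=.
apply/subsetP => w wK; rewrite inE (subsetP sKY' _ wK) /=.
pose P z := (z \in comp Y v) && connect (adj_on Y') v z.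
suff /andP[] : P w by [].
move: wK; rewrite inE => /andP[_]; apply: connect_invariant; last first.
  by rewrite /P mem_comp ?connect0.
move=> u u' /andP[uK cvu] /andP[/andP[uY u'Y] ruu'].
have u'K : u' \in comp Y v.
  move: uK; rewrite !inE u'Y => /andP[_ /connect_trans]; apply.
  by rewrite connect1 // /adj_on uY u'Y.
rewrite /P u'K (connect_trans cvu) // connect1 //.
by rewrite /adj_on ruu' !(subsetP sKY').
Qed.

Lemma odd_comps_delete Y v : v \in Y -> ~~ odd #|comp Y v| ->
  #|odd_comps Y| < #|odd_comps (Y :\ v)|.
Proof.
move=> vY evv; have sub : odd_comps Y \subset odd_comps (Y :\ v).
  apply/subsetP => K; rewrite !inE => /andP[KY oK]; rewrite oK andbT.
  have [u uK] := comps_nonempty KY.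
  have vK : v \notin K by apply: contraNN evv => /(comps_comp KY) <-.
  have sKYv : K \subset Y :\ v.
    apply/subsetP => z zK; rewrite in_setD1 (subsetP (comps_sub KY)) ?andbT //.
    by apply: contraNneq vK => <-.
  have uY := subsetP (comps_sub KY) u uK.
  rewrite (comps_comp KY uK) -(comp_restrict (subD1set Y v)) -?(comps_comp KY uK) //.
  by apply: imset_f; apply: (subsetP sKYv).
rewrite ltn_neqAle subset_leq_card // andbT; apply/negP => /eqP same.
have := odd_card_comps (Y :\ v).
by rewrite -same -odd_card_comps (cardsD1 v Y) vY add1n /=; case: (odd _).
Qed.

Lemma comps_clique Y K :
  (forall x y z, x \in Y -> y \in Y -> z \in Y -> r x y -> r y z -> x != z -> r x z) ->
  K \in comps Y -> {in K &, forall x y, x != y -> r x y}.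
Proof.
move=> trans KY x y xK yK nxy; have xY := subsetP (comps_sub KY) x xK.
have := yK; rewrite (comps_comp KY xK) inE => /andP[_ cxy].
suff /orP[/eqP yx|//] : (y == x) || r x y by rewrite yx eqxx in nxy.
apply: (@connect_invariant _ _ (fun z => (z == x) || r x z) x) cxy; last by rewrite eqxx.
move=> u w /orP[/eqP->|rxu] /andP[/andP[uY wY] ruw]; first by rewrite ruw orbT.
by case: (eqVneq w x) => [->|nwx]; rewrite ?eqxx // (trans x u w) ?orbT // eq_sym.
Qed.

End Components.

Lemma comp_subrel (V : finType) (r r' : rel V) Y v :
  subrel r r' -> comp r Y v \subset comp r' Y v.
Proof.
move=> srr'; apply/subsetP => w; rewrite !inE => /andP[-> /=].
by apply: connect_sub => x y /andP[xyY /srr' rxy]; rewrite connect1 // /adj_on xyY.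
Qed.

(* Every odd r'-component contains an odd r-component, whose r'-hull it is. *)
Lemma odd_comps_subrel (V : finType) (r r' : rel V) Y :
  symmetric r -> symmetric r' -> subrel r r' ->
  #|odd_comps r' Y| <= #|odd_comps r Y|.
Proof.
move=> r_sym r'_sym srr'.
pose hull (L : {set V}) := \bigcup_(u in L) comp r' Y u.
apply: leq_trans (leq_imset_card hull _); apply: subset_leq_card.
apply/subsetP => K; rewrite inE => /andP[KY oK]; have sKY := comps_sub KY.
have /card_gt0P[L] : 0 < #|odd_comps r K|.
  by move: (odd_card_comps r_sym K); rewrite oK; case: #|_|.
rewrite inE => /andP[/imsetP[u uK ->] oL]; have uY := subsetP sKY u uK.
have Ku : comp r Y u \subset K by rewrite (comps_comp r'_sym KY uK) comp_subrel.
rewrite (comp_restrict sKY uY Ku) in oL *.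
apply/imsetP; exists (comp r Y u); first by rewrite inE imset_f.
apply/eqP; rewrite eqEsubset; apply/andP; split.
  by apply: (bigcup_max u); rewrite ?mem_comp // -(comps_comp r'_sym KY uK).
by apply/bigcupsP => w /(subsetP Ku) wK; rewrite -(comps_comp r'_sym KY wK).
Qed.

Section Matchings.
Variables (V : finType) (r : rel V).
Implicit Types (X A B : {set V}) (m : V -> V).

Definition matches X m :=
  forall x, x \in X -> [/\ m x \in X, m x != x, m (m x) = x & r x (m x)].

Definition matchable X := exists m, matches X m.

Lemma matchable0 : matchable set0.
Proof. by exists id => x; rewrite inE. Qed.

Lemma matchableU A B :
  [disjoint A & B] -> matchable A -> matchable B -> matchable (A :|: B).
Proof.
move=> dAB [mA hA] [mB hB].
exists (fun x => if x \in A then mA x else mB x) => x; rewrite inE => /orP[xA|xB].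
  by have [mxA ? mAK ?] := hA x xA; rewrite xA mxA mAK inE mxA.
have [mxB ? mBK ?] := hB x xB.
by rewrite (disjointFl dAB xB) (disjointFl dAB mxB) mBK inE mxB orbT.
Qed.

Lemma matchable_bigcup (I : finType) (P : {set I}) (F : I -> {set V}) :
  {in P &, forall i j, i != j -> [disjoint F i & F j]} ->
  {in P, forall i, matchable (F i)} -> matchable (\bigcup_(i in P) F i).
Proof.
have [n] := ubnP #|P|; elim: n P => // n IH P ltPn disj mF.
have [->|[i iP]] := set_0Vmem P; first by rewrite big_set0; apply: matchable0.
rewrite (big_setD1 i iP) /=; apply: matchableU.
- by apply: bigcup_disjoint => j /setD1P[nji jP]; rewrite disj // eq_sym.
- exact: mF.
- apply: IH => [|j k /setD1P[_ jP] /setD1P[_ kP]|j /setD1P[_ jP]].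
  + by rewrite (cardsD1 i P) iP in ltPn.
  + exact: disj.
  + exact: mF.
Qed.

Lemma matchable_pair x y : x != y -> r x y -> r y x -> matchable [set x; y].
Proof.
move=> nxy rxy ryx; exists (fun z => if z == x then y else x) => z.
have nyx : y != x by rewrite eq_sym.
by rewrite !inE => /orP[]/eqP->; rewrite ?eqxx ?(negbTE nyx) ?eqxx ?orbT.
Qed.

Lemma matchable_clique X : ~~ odd #|X| ->
  {in X &, forall x y, x != y -> r x y} -> matchable X.
Proof.
have [n] := ubnP #|X|; elim: n X => // n IH X ltXn evX clX.
have [->|[x xX]] := set_0Vmem X; first exact: matchable0.
have [X'0|[y yX']] := set_0Vmem (X :\ x).
  by rewrite (cardsD1 x X) xX X'0 cards0 in evX.
have [nyx yX] := setD1P yX'.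
have cardX : #|X| = #|X :\ x :\ y|.+2.
  by rewrite (cardsD1 x X) xX (cardsD1 y (X :\ x)) yX'.
rewrite -(setD1K xX) -(setD1K yX') setUA; apply: matchableU.
- rewrite disjoints_subset; apply/subsetP => z.
  by rewrite !inE => /orP[]/eqP->; rewrite eqxx ?andbF.
- by apply: matchable_pair; rewrite 1?eq_sym // clX // eq_sym.
- apply: IH => [||u w /setD1P[_ /setD1P[_ uX]] /setD1P[_ /setD1P[_ wX]]].
  + by rewrite cardX ltnS in ltXn; apply: ltnW.
  + by move: evX; rewrite cardX /= negbK.
  + exact: clX.
Qed.

End Matchings.

Definition add_edge (V : eqType) (r : rel V) (a c : V) : rel V :=
  fun x y => r x y || ((x == a) && (y == c)) || ((x == c) && (y == a)).

Lemma add_edge_sym (V : eqType) (r : rel V) a c :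
  symmetric r -> symmetric (add_edge r a c).
Proof.
move=> r_sym x y; rewrite /add_edge r_sym.
by case: (x == a); case: (x == c); case: (y == a); case: (y == c); rewrite /= ?orbT ?orbF.
Qed.

(* n1 and n2 are perfect matchings of X in r + ac and r + bd using the added
   edges.  The walk d, n1 d, n2 (n1 d), ... alternates between them; it is
   stopped at the first vertex v = walk j that is a or c, or whose n1-partner
   is b.  Then X splits into the part C of the walk before v, matched by n1,
   the edge vb, and the rest, which is closed under n2. *)
Section Switching.
Variables (V : finType) (r : rel V) (X : {set V}) (a b c d : V) (n1 n2 : V -> V).
Hypotheses (r_sym : symmetric r) (rab : r a b) (rcb : r c b).
Hypotheses (bX : b \in X) (dX : d \in X).
Hypotheses (n1K : involutive n1) (n2K : involutive n2).
Hypotheses (n1M : matches (add_edge r a c) X n1) (n1a : n1 a = c).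
Hypotheses (n2M : matches (add_edge r b d) X n2) (n2d : n2 d = b).

Let n1_edge x : x \in X -> x != a -> x != c -> r x (n1 x).
Proof.
move=> xX /negbTE xa /negbTE xc.
by have [_ _ _] := n1M xX; rewrite /add_edge xa xc !orbF.
Qed.

Let n2_edge x : x \in X -> x != b -> x != d -> r x (n2 x).
Proof.
move=> xX /negbTE xb /negbTE xd.
by have [_ _ _] := n2M xX; rewrite /add_edge xb xd !orbF.
Qed.

Let n1_ac x : (n1 x == a) || (n1 x == c) = (x == c) || (x == a).
Proof. by rewrite !(can2_eq n1K n1K) n1a -n1a n1K. Qed.

Let walk i := iter i (fun x => n2 (n1 x)) d.

Let walkS i : walk i.+1 = n2 (n1 (walk i)).
Proof. by []. Qed.

Let walk_in i : walk i \in X.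
Proof. by elim: i => //= i IH; have [/n2M[]] := n1M IH. Qed.

Let walk_eq i j : i <= j -> walk i = walk j -> walk (j - i) = d.
Proof.
elim: i j => [|i IH] [|j] // leij; rewrite subSS => /= E.
by apply: IH => //; apply/(can_inj n1K)/(can_inj n2K).
Qed.

(* Conjugation by n1 inverts the step n2 \o n1, so walk s = n1 (walk t) would
   propagate inwards to a fixed point of n1 or of n2. *)
Let n1_walk_neq s t : n1 (walk s) != walk t.
Proof.
wlog lest : s t / s <= t.
  move=> gen; case: (leqP s t) => [/gen//|/ltnW/gen].
  by apply: contraNneq => <-; rewrite n1K.
rewrite -(subnKC lest); move: (t - s) => k; clear t lest.
elim/ltn_ind: k s => -[|[|k]] IH s.
- by have [_] := n1M (walk_in s); rewrite addn0.
- rewrite addn1 walkS; have [n1X _ _ _] := n1M (walk_in s).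
  by have [_ + _ _] := n2M n1X; rewrite eq_sym.
- apply/eqP => E; have /eqP[] := IH k (leqnSn _) s.+1.
  by rewrite walkS E addnS walkS n2K n1K addSnnS.
Qed.

Let n1_walk_b : exists k, n1 (walk k) = b.
Proof.
have step_inj : injective (fun x => n2 (n1 x)).
  by apply: (can_inj (g := fun x => n1 (n2 x))) => x; rewrite n2K n1K.
have := iter_order step_inj d; have := order_gt0 (fun x => n2 (n1 x)) d.
case: order => // k _ walk_k; exists k.
by rewrite -n2d -[d in n2 d]walk_k /= n2K.
Qed.

Let stop i := [|| walk i == a, walk i == c | n1 (walk i) == b].

Let stop_exists : exists i, stop i.
Proof. by have [k n1k] := n1_walk_b; exists k; rewrite /stop n1k eqxx !orbT. Qed.

Let j := ex_minn stop_exists.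

Let stop_j : stop j.
Proof. by rewrite /j; case: ex_minnP. Qed.

Let before_j i : i < j -> ~~ stop i.
Proof.
rewrite /j; case: ex_minnP => m _ min_m lt_im.
by apply/negP => /min_m; rewrite leqNgt lt_im.
Qed.

Let v := walk j.
Let C := \bigcup_(i < j) [set walk i; n1 (walk i)].
Let D := C :|: [set v; b].

Let CP x : x \in C -> exists2 i, i < j & x = walk i \/ x = n1 (walk i).
Proof. by case/bigcupP=> i _; rewrite !inE => /orP[]/eqP->; exists i; auto. Qed.

Let walk_C i : i < j -> walk i \in C.
Proof. by move=> lt_ij; apply/bigcupP; exists (Ordinal lt_ij); rewrite ?inE ?eqxx. Qed.

Let n1_walk_C i : i < j -> n1 (walk i) \in C.
Proof. by move=> lt_ij; apply/bigcupP; exists (Ordinal lt_ij); rewrite ?inE ?eqxx ?orbT. Qed.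

Let matches_C : matches r C n1.
Proof.
move=> x /CP[i lt_ij ex]; have := before_j lt_ij.
rewrite !negb_or => /and3P[na nc _].
have [xX xac] : x \in X /\ (x != a) && (x != c).
  case: ex => ->; first by rewrite walk_in na nc.
  by have [] := n1M (walk_in i); rewrite -negb_or n1_ac negb_or na nc.
have [_ n1x n1xK _] := n1M xX; case/andP: xac => xa xc.
split=> //; last exact: n1_edge.
by case: ex => ->; rewrite ?n1K ?walk_C ?n1_walk_C.
Qed.

Let v_notin_C : v \notin C.
Proof.
apply/negP => /CP[i lt_ij [/esym|] E]; last by have := n1_walk_neq i j; rewrite -E eqxx.
have lt_pred : (j - i).-1 < j by move: lt_ij; clear; lia.
have ji : (j - i).-1.+1 = j - i by rewrite prednK // subn_gt0.
move: (walk_eq (ltnW lt_ij) E); rewrite -ji walkS => /(congr1 n2).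
rewrite n2K n2d => n1b.
by have := before_j lt_pred; rewrite /stop n1b eqxx !orbT.
Qed.

Let b_notin_C : b \notin C.
Proof.
have [k n1k] := n1_walk_b; apply/negP => /CP[i lt_ij [E|E]].
  by have := n1_walk_neq k i; rewrite n1k E eqxx.
by have := before_j lt_ij; rewrite /stop -E eqxx !orbT.
Qed.

Let v_neq_b : v != b.
Proof. by have [k n1k] := n1_walk_b; rewrite -n1k eq_sym n1_walk_neq. Qed.

Let r_v_b : r v b.
Proof.
have := stop_j; rewrite /stop -/v.
case: eqP => [->//|va]; case: eqP => [->//|vc] /= /eqP <-.
by apply: n1_edge; rewrite ?walk_in //; apply/eqP.
Qed.

Let walk_D i : i <= j -> walk i \in D.
Proof.
by rewrite leq_eqVlt => /orP[/eqP->|/walk_C iC]; rewrite !inE ?eqxx ?iC ?orbT.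
Qed.

Let n2_walk_D i : i <= j -> n2 (walk i) \in D.
Proof.
by case: i => [_|i /n1_walk_C iC]; rewrite ?n2d ?walkS ?n2K !inE ?eqxx ?iC ?orbT.
Qed.

Let n2_D x : x \in D -> n2 x \in D.
Proof.
case/setUP => [/CP[i lt_ij [->|->]]|]; first exact/n2_walk_D/ltnW.
  by rewrite -walkS; apply: walk_D.
case/set2P=> ->; first exact: (n2_walk_D (leqnn j)).
by rewrite -n2d n2K (walk_D (leq0n j)).
Qed.

Let matches_outside_D : matches r (X :\: D) n2.
Proof.
move=> x /setDP[xX xD]; have [n2X n2x n2xK _] := n2M xX.
split=> //; first by rewrite inE n2X andbT; apply: contra xD => /n2_D; rewrite n2xK.
apply: n2_edge => //; apply: contraNneq xD => ->; last exact: (walk_D (leq0n j)).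
by rewrite !inE eqxx !orbT.
Qed.

Lemma matchable_switch : matchable r X.
Proof.
have DX : D \subset X.
  apply/subsetP => x /setUP[/CP[i _ [->|->]]|/set2P[]->] //; try exact: walk_in.
  by have [] := n1M (walk_in i).
rewrite -(setID X D) (setIidPr DX).
apply: matchableU; last by exists n2; apply: matches_outside_D.
  by rewrite disjoint_sym disjoints_subset setDE subsetIr.
apply: matchableU; last by apply: matchable_pair v_neq_b r_v_b _; rewrite r_sym.
  rewrite disjoint_sym disjoints_subset; apply/subsetP => x /set2P[]->.
    by rewrite inE v_notin_C.
  by rewrite inE b_notin_C.
by exists n1; apply: matches_C.
Qed.

End Switching.

(* With f injecting the odd components of X - S into S, X is covered by the even
   cliques K + f K (K odd), K (K even) and the unused part of S. *)
Section UniversalCliques.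
Variables (V : finType) (r : rel V) (X S : {set V}) (f : {set V} -> V).
Hypotheses (r_sym : symmetric r) (SX : S \subset X) (evX : ~~ odd #|X|).
Hypothesis univ : forall s w, s \in S -> w \in X -> w != s -> r s w.
Let Y := X :\: S.
Let O := odd_comps r Y.
Hypothesis cliq : forall K, K \in comps r Y -> {in K &, forall x y, x != y -> r x y}.
Implicit Types (K : {set V}) (x y : V).
Hypotheses (fS : {in O, forall K, f K \in S}) (f_inj : {in O &, injective f}).

Let block K := if odd #|K| then f K |: K else K.
Let rest := S :\: f @: O.

Let comps_notin_S K x : K \in comps r Y -> x \in K -> x \notin S.
Proof. by move=> /comps_sub/subsetP sKY /sKY; rewrite inE => /andP[]. Qed.

Let comps_in_X K x : K \in comps r Y -> x \in K -> x \in X.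
Proof. by move=> /comps_sub/subsetP sKY /sKY; rewrite inE => /andP[]. Qed.

Let blockP K x : K \in comps r Y -> x \in block K -> x \in K \/ K \in O /\ x = f K.
Proof.
rewrite /block; case: ifP => [oK KY /setU1P[->|]|_ _]; auto.
by right; rewrite inE KY oK.
Qed.

Let cover_blocks : X = (\bigcup_(K in comps r Y) block K) :|: rest.
Proof.
apply/eqP; rewrite eqEsubset subUset (subset_trans (subsetDl _ _) SX) andbT.
apply/andP; split; last first.
  apply/bigcupsP => K KY; apply/subsetP => x /(blockP KY)[/(comps_in_X KY)//|[KO ->]].
  exact/(subsetP SX)/fS.
apply/subsetP => x xX; case: (boolP (x \in S)) => xS; last first.
  have xY : x \in Y by rewrite inE xS.
  apply/setUP; left; apply/bigcupP; exists (comp r Y x); first exact: imset_f.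
  by rewrite /block; case: ifP => _; [apply: setU1r|]; apply: mem_comp.
case/boolP: (x \in f @: O) => [/imsetP[K KO ->]|nfx]; last by rewrite !inE xS nfx orbT.
have := KO; rewrite inE => /andP[KY oK]; apply/setUP; left.
by apply/bigcupP; exists K; rewrite // /block oK setU11.
Qed.

Let matchable_block K : K \in comps r Y -> matchable r (block K).
Proof.
move=> KY; apply: matchable_clique => [|x y /(blockP KY) xB /(blockP KY) yB nxy].
  rewrite /block; case: ifP => [oK|-> //].
  have fK : f K \notin K by apply/negP => /(comps_notin_S KY); rewrite fS // inE KY oK.
  by rewrite cardsU1 fK add1n /= oK.
case: xB yB nxy => [xK|[KO ->]] [yK|[KO' ->]] nxy; last by rewrite eqxx in nxy.
- exact: (cliq KY xK yK nxy).
- by rewrite r_sym univ // ?fS // (comps_in_X KY).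
- by rewrite univ // ?fS // ?(comps_in_X KY) // eq_sym.
Qed.

Let matchable_blocks : matchable r (\bigcup_(K in comps r Y) block K).
Proof.
apply: matchable_bigcup => [K K' KY K'Y nKK'|]; last exact: matchable_block.
apply/disjointP => x /(blockP KY)[xK|[KO ->]] /(blockP K'Y)[xK'|[K'O E]].
- by rewrite (comps_comp r_sym KY xK) (comps_comp r_sym K'Y xK') eqxx in nKK'.
- by have := comps_notin_S KY xK; rewrite E fS.
- by have := comps_notin_S K'Y xK'; rewrite fS.
- by rewrite (f_inj KO K'O E) eqxx in nKK'.
Qed.

Let matchable_rest : matchable r rest.
Proof.
have sfOS : f @: O \subset S by apply/subsetP => _ /imsetP[K KO ->]; apply: fS.
apply: matchable_clique => [|x y /setDP[xS _] /setDP[yS _] nxy].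
  rewrite cardsD (setIidPr sfOS) (card_in_imset f_inj) oddB.
    by rewrite odd_odd_comps_setD // addbb.
  by rewrite -(card_in_imset f_inj) subset_leq_card.
by rewrite univ ?(subsetP SX) // eq_sym.
Qed.

Lemma matchable_universal_injection : matchable r X.
Proof.
rewrite cover_blocks; apply: matchableU matchable_blocks matchable_rest.
apply/disjointP => x /bigcupP[K KY /(blockP KY)[xK|[KO ->]]] /setDP[xS xfO].
  by rewrite (negbTE (comps_notin_S KY xK)) in xS.
by rewrite imset_f in xfO.
Qed.

End UniversalCliques.

Lemma matchable_universal (V : finType) (r : rel V) (X S : {set V}) :
  symmetric r -> S \subset X -> ~~ odd #|X| ->
  (forall s w, s \in S -> w \in X -> w != s -> r s w) ->
  (forall K, K \in comps r (X :\: S) -> {in K &, forall x y, x != y -> r x y}) ->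
  #|odd_comps r (X :\: S)| <= #|S| -> matchable r X.
Proof.
move=> r_sym SX evX univ cliq leOS.
have [->|[x0 _]] := set_0Vmem X; first exact: matchable0.
have [f fS f_inj] := exists_injection x0 leOS.
exact: (matchable_universal_injection r_sym SX evX univ cliq fS f_inj).
Qed.

Section Tutte.
Variables (V : finType) (X : {set V}).
Implicit Types (r : rel V) (S : {set V}).

Lemma matchable_add_edge r a c : a \in X -> ~ matchable r X ->
  matchable (add_edge r a c) X ->
  exists n, [/\ involutive n, matches (add_edge r a c) X n & n a = c].
Proof.
move=> aX not_r [m mM].
have mac : m a = c.
  apply/eqP/negPn/negP => mac; apply: not_r; exists m => x xX.
  have [mxX mx mK] := mM x xX; rewrite /add_edge => e; split=> //.
  case/orP: e => [/orP[//|/andP[/eqP xa /eqP mxc]]|/andP[/eqP xc /eqP mxa]].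
    by rewrite -xa mxc eqxx in mac.
  by rewrite -mxa mK xc eqxx in mac.
exists (fun x => if x \in X then m x else x); split=> [x /=||]; last by rewrite aX.
  case: (boolP (x \in X)) => [xX|/negbTE xX]; last by rewrite !xX.
  by have [mxX _ mK _] := mM x xX; rewrite mxX mK.
by move=> x xX; have [mxX mx mK e] := mM x xX; rewrite xX mxX mK.
Qed.

Lemma tutte_step r : symmetric r ->
  (forall S, S \subset X -> #|odd_comps r (X :\: S)| <= #|S|) ->
  (forall a c, a \in X -> c \in X -> a != c -> ~~ r a c ->
     matchable (add_edge r a c) X) ->
  matchable r X.
Proof.
move=> r_sym tutte_r maximal; have [//|not_r] := classic (matchable r X).
pose S := [set v in X | [forall w in X, (w != v) ==> r v w]].
have SX : S \subset X by apply/subsetP => v; rewrite inE => /andP[].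
have univ s w : s \in S -> w \in X -> w != s -> r s w.
  by rewrite inE => /andP[_ /forall_inP univ_s] /univ_s /implyP.
have evX : ~~ odd #|X|.
  have := tutte_r set0 (sub0set X); rewrite setD0 cards0 leqn0 cards_eq0.
  by rewrite (odd_card_comps r_sym) => /eqP->; rewrite cards0.
apply: (matchable_universal r_sym SX evX univ _ (tutte_r S SX)) => K.
apply: comps_clique => // a b c /setDP[aX _] /setDP[bX bS] /setDP[cX _] rab rbc nac.
apply/negPn/negP => nrac; apply: (not_r).
move: bS; rewrite inE bX /= negb_forall_in => /exists_inP[d dX].
rewrite negb_imply eq_sym => /andP[nbd nrbd].
have [n1 [n1K n1M n1a]] := matchable_add_edge aX not_r (maximal a c aX cX nac nrac).
have [n2 [n2K n2M n2b]] := matchable_add_edge bX not_r (maximal b d bX dX nbd nrbd).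
apply: (matchable_switch r_sym rab _ bX dX n1K n2K n1M n1a n2M); first by rewrite r_sym.
by rewrite -n2b n2K.
Qed.

Theorem tutte r : symmetric r ->
  (forall S, S \subset X -> #|odd_comps r (X :\: S)| <= #|S|) -> matchable r X.
Proof.
have [n] := ubnP #|[set p : V * V | ~~ r p.1 p.2]|.
elim: n r => // n IH r lt_n r_sym tutte_r.
apply: tutte_step => // a c aX cX nac nrac; apply: IH.
- apply: leq_trans (ltnSE lt_n); apply: proper_card; rewrite properE; apply/andP; split.
    by apply/subsetP => -[x y]; rewrite !inE /add_edge /= !negb_or => /andP[/andP[]].
  by apply/subsetPn; exists (a, c); rewrite !inE /add_edge /= ?eqxx ?orbT.
- exact: add_edge_sym.
- move=> S SX; apply: leq_trans (tutte_r S SX); apply: odd_comps_subrel => //.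
    exact: add_edge_sym.
  by move=> x y rxy; rewrite /add_edge rxy.
Qed.

Lemma tutte_barrier r : symmetric r -> ~~ odd #|X| -> ~ matchable r X ->
  exists2 S : {set V}, S \subset X & #|S| + 2 <= #|odd_comps r (X :\: S)|.
Proof.
move=> r_sym evX not_r; apply: NNPP => noS; apply/not_r/tutte => // S SX.
rewrite leqNgt; apply/negP => ltS; apply: noS; exists S => //; rewrite addn2.
move: ltS (odd_odd_comps_setD r_sym evX SX); rewrite leq_eqVlt.
by case/orP => [/eqP<- /=|//]; case: odd.
Qed.

Lemma maximal_barrier_odd r S : symmetric r -> S \subset X ->
  #|S| + 2 <= #|odd_comps r (X :\: S)| ->
  (forall S', S' \subset X -> #|S'| + 2 <= #|odd_comps r (X :\: S')| -> #|S'| <= #|S|) ->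
  {in comps r (X :\: S), forall L : {set V}, odd #|L|}.
Proof.
move=> r_sym SX leSO maxS L LY; apply: contraT => evL; have [v vL] := comps_nonempty LY.
have /setDP[vX vS] := subsetP (comps_sub LY) v vL.
have := odd_comps_delete r_sym (subsetP (comps_sub LY) v vL).
rewrite -(comps_comp r_sym LY vL) => /(_ evL); rewrite setDDl setUC => lt_odd.
have := maxS (v |: S); rewrite subUset sub1set vX SX cardsU1 vS -addnA add1n.
by move=> /(_ isT (leq_ltn_trans leSO lt_odd)); rewrite ltnn.
Qed.

End Tutte.

Section Cubic.
Variables (V E : finType) (src tgt : E -> V).
Implicit Types (X Y S K L : {set V}).

Definition adjacent : rel V := fun x y => [exists e, links src tgt e x y].

Definition edges_at S := [set e | (src e \in S) || (tgt e \in S)].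

Lemma links_sym e x y : links src tgt e x y = links src tgt e y x.
Proof. by rewrite /links orbC. Qed.

Lemma adjacent_sym : symmetric adjacent.
Proof. by move=> x y; apply/existsP/existsP => -[e]; exists e; rewrite links_sym. Qed.

Lemma matchable_perfect X : matchable adjacent X -> has_perfect_matching src tgt X.
Proof.
move=> [m mM]; pose edge x y := [pick e | links src tgt e x y].
have edgeC x y : edge x y = edge y x by apply: eq_pick => e; rewrite links_sym.
have edgeP x : x \in X -> exists2 e, edge x (m x) = Some e & links src tgt e x (m x).
  move=> xX; have [_ _ _ /existsP[e0 le0]] := mM x xX.
  by rewrite /edge; case: pickP => [e le|/(_ e0)]; [exists e | rewrite le0].
exists [set e | [exists x in X, edge x (m x) == Some e]]; split.
- move=> e; rewrite inE => /exists_inP[x xX /eqP].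
  have [e' -> le' [<-]] := edgeP x xX; have [mxX mx _ _] := mM x xX.
  by case/orP: le' => /andP[/eqP-> /eqP->]; split; rewrite // eq_sym.
- move=> v vX; apply/eqP/cards1P; have [e ve lve] := edgeP v vX; exists e.
  apply/setP => f; rewrite !inE.
  apply/andP/eqP => [[/exists_inP[x xX /eqP xf] fv]|->].
    have [f' xf' lf'] := edgeP x xX; move: xf; rewrite xf' => -[ff']; subst f'.
    have [_ _ mK _] := mM x xX.
    have [vx|vmx] : v = x \/ v = m x.
      case/orP: lf' => /andP[/eqP s /eqP t];
        by case/orP: fv => /eqP; rewrite ?s ?t; auto.
      by move: ve; rewrite vx xf' => -[].
    by move: ve; rewrite vmx mK edgeC xf' => -[].
  split; first by apply/exists_inP; exists v; rewrite // ve.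
  by case/orP: lve => /andP[/eqP-> /eqP->]; rewrite eqxx ?orbT.
Qed.

Lemma comps_cut Y K e : K \in comps adjacent Y -> e \in cut src tgt K ->
  (src e \in K /\ tgt e \notin Y) \/ (tgt e \in K /\ src e \notin Y).
Proof.
move=> KY; rewrite inE.
have closed x y : x \in K -> links src tgt e x y -> y \in Y -> y \in K.
  move=> xK lxy yY; apply: (comps_closed adjacent_sym KY xK yY).
  by apply/existsP; exists e.
case: (boolP (src e \in K)) => sK; case: (boolP (tgt e \in K)) => tK //= _.
  by left; split=> //; apply: contra tK; apply: closed sK _; rewrite /links !eqxx.
by right; split=> //; apply: contra sK; apply: closed tK _; rewrite /links !eqxx orbT.
Qed.

Lemma comps_cut_disjoint Y K K' :
  K \in comps adjacent Y -> K' \in comps adjacent Y -> K != K' ->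
  [disjoint cut src tgt K & cut src tgt K'].
Proof.
move=> KY K'Y nKK'; have dKK' := comps_disjoint adjacent_sym KY K'Y nKK'.
have [sKY sK'Y] := (subsetP (comps_sub KY), subsetP (comps_sub K'Y)).
apply/disjointP => e /(comps_cut KY) + /(comps_cut K'Y).
case=> -[eK eY] [] [eK' eY'].
- by rewrite (disjointFr dKK' eK) in eK'.
- by rewrite sK'Y in eY.
- by rewrite sK'Y in eY.
- by rewrite (disjointFr dKK' eK) in eK'.
Qed.

Lemma cut_comps_sub X S L : L \in comps adjacent (X :\: S) ->
  cut src tgt L \subset edges_at S :|: cut src tgt X.
Proof.
move=> LY; have LX := subset_trans (comps_sub LY) (subsetDl X S).
apply/subsetP => e /(comps_cut LY) [] [/(subsetP LX) eX];
  by rewrite !inE negb_and negbK eX => /orP[->|/negbTE->]; rewrite ?orbT.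
Qed.

Lemma sum_cut_odd_comps X S :
  \sum_(L in odd_comps adjacent (X :\: S)) #|cut src tgt L|
    <= #|edges_at S :|: cut src tgt X|.
Proof.
rewrite -card_bigcup_disjoint => [|L L' /setIdP[LY _] /setIdP[L'Y _]]; last first.
  exact: (comps_cut_disjoint LY L'Y).
by apply/subset_leq_card/bigcupsP => L /setIdP[LY _]; apply: cut_comps_sub.
Qed.

Hypotheses (cubic_G : cubic src tgt) (bridgeless_G : bridgeless src tgt).

Lemma incidences_at v : \sum_e ((src e == v) + (tgt e == v)) = 3.
Proof. by rewrite -(cubic_G v); apply: eq_bigl => e; rewrite !in_setT. Qed.

Lemma card_incidences Y : \sum_e ((src e \in Y) + (tgt e \in Y)) = 3 * #|Y|.
Proof.
have one u : \sum_(v in Y) (u == v : nat) = (u \in Y : nat).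
  case: (boolP (u \in Y)) => uY; last first.
    by rewrite big1 // => v vY; case: eqP => // uv; rewrite uv vY in uY.
  by rewrite (bigD1 u uY) eqxx big1 // => v /andP[_ /negbTE]; rewrite eq_sym => ->.
rewrite mulnC -sum_nat_const (eq_bigr _ (fun v _ => esym (incidences_at v))).
by rewrite exchange_big; apply: eq_bigr => e _; rewrite big_split /= !one.
Qed.

Lemma odd_cut Y : odd #|cut src tgt Y| = odd #|Y|.
Proof.
have := congr1 odd (card_incidences Y); rewrite oddM /= => <-.
rewrite (eq_bigl (mem [set: E])) => [|e]; last by rewrite !inE.
rewrite odd_sum; congr odd; apply: eq_card => e; rewrite !inE.
by case: (src e \in Y); case: (tgt e \in Y).
Qed.

Lemma cut_neq1 Y : #|cut src tgt Y| != 1.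
Proof.
apply/negP => /cards1P[e cutY]; have := bridgeless_G e; rewrite /bridge negbK => conn.
have : (tgt e \in Y) == (src e \in Y).
  apply: (connect_invariant (P := fun z => (z \in Y) == (src e \in Y))) conn => //.
  move=> u w /eqP <- /existsP[f /andP[nfe lf]]; apply: contraR nfe => uw.
  rewrite -in_set1 -cutY inE.
  by case/orP: lf => /andP[/eqP-> /eqP->]; rewrite // eq_sym.
by rewrite eq_sym; have := set11 e; rewrite -cutY inE => /negbTE->.
Qed.

Lemma cut_ge3 Y : odd #|Y| -> 3 <= #|cut src tgt Y|.
Proof. by rewrite -odd_cut; have := cut_neq1 Y; case: #|_| => [|[|[|n]]]. Qed.

Lemma deg_in_full X v : v \in X ->
  (forall e, (src e == v) || (tgt e == v) -> e \notin cut src tgt X) ->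
  deg_in src tgt X v = 3.
Proof.
move=> vX inner; rewrite -(incidences_at v) /deg_in big_mkcond; apply: eq_bigr => e _.
case: ifP => // /negbT; rewrite negb_and => out.
apply/esym/eqP; rewrite addn_eq0 !eqb0; apply/andP; split; apply/negP => /eqP ev;
  have := inner e; rewrite ev eqxx ?orbT inE ev vX => /(_ isT);
  by move: out; rewrite ev vX /=; case: (_ \in X).
Qed.

Lemma tight_barrier X S : #|cut src tgt X| = 6 -> S \subset X ->
  #|S| + 2 <= #|odd_comps adjacent (X :\: S)| ->
  [/\ #|odd_comps adjacent (X :\: S)| = #|S| + 2,
      {in odd_comps adjacent (X :\: S), forall L, #|cut src tgt L| = 3},
      independent src tgt S
    & {in S, forall v, deg_in src tgt X v = 3}].
Proof.
move=> cutX6 SX leSO; set O := odd_comps adjacent (X :\: S).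
set T := edges_at S; pose B := [set e | (src e \in S) && (tgt e \in S)].
have cut3 L : L \in O -> 3 <= #|cut src tgt L| by case/setIdP => _ /cut_ge3.
have sum_ge (Q : {set {set V}}) :
    Q \subset O -> 3 * #|Q| <= \sum_(L in Q) #|cut src tgt L|.
  by move=> sQO; rewrite mulnC -sum_nat_const; apply: leq_sum => L /(subsetP sQO)/cut3.
have TB : #|T| + #|B| = 3 * #|S|.
  rewrite -card_incidences -!sum1_card big_mkcond [X in _ + X]big_mkcond -big_split.
  by apply: eq_bigr => e _; rewrite !inE; case: (src e \in S); case: (tgt e \in S).
have := sum_cut_odd_comps X S; have := cardsUI T (cut src tgt X).
have := sum_ge O (subxx O); move: leSO; rewrite -/O -/T cutX6 => leSO sumO UI sumT.
(* 3 #|O| <= sum <= #|T :|: cut X| = #|T| + 6 - #|T :&: cut X|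
          = 3 #|S| - #|B| + 6 - #|T :&: cut X| <= 3 #|O| - #|B| - #|T :&: cut X| *)
have [eO eB eI eSum] : [/\ #|O| = #|S| + 2, #|B| = 0, #|T :&: cut src tgt X| = 0
  & \sum_(L in O) #|cut src tgt L| = 3 * #|O|] by split; lia.
split=> // [L LO|e|v vS].
- have := sum_ge (O :\ L) (subD1set O L); have := cardsD1 L O; have := cut3 L LO.
  by rewrite (big_setD1 L LO) /= in eSum; rewrite LO /=; lia.
- apply/negP => eSS; move/eqP: eB; rewrite cards_eq0 => /eqP/setP/(_ e).
  by rewrite !inE eSS.
- apply: deg_in_full (subsetP SX v vS) _ => e ev; apply/negP => ecut.
  have eT : e \in T by rewrite inE; case/orP: ev => /eqP->; rewrite vS ?orbT.
  move/eqP: eI; rewrite cards_eq0 => /eqP/setP/(_ e).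
  by rewrite in_setI eT ecut inE.
Qed.

End Cubic.

Theorem theorem4p1 (V E : finType) (src tgt : E -> V) (X : {set V}) :
  cubic src tgt -> bridgeless src tgt -> #|cut src tgt X| = 6 ->
  has_perfect_matching src tgt X \/
  exists S : {set V},
    [/\ S \subset X,
        independent src tgt S
      & forall v, v \in S -> deg_in src tgt X v = 3] /\
    [/\ forall L, L \in components src tgt (X :\: S) -> odd #|L|,
        #|[set L in components src tgt (X :\: S) | odd #|L|]| = #|S| + 2
      & forall L, L \in components src tgt (X :\: S) -> #|cut src tgt L| = 3].
Proof.
move=> cubic_G bridgeless_G cutX6.
have [|no_pm] := classic (has_perfect_matching src tgt X); [by left | right].
have adj_sym := adjacent_sym src tgt.
have evX : ~~ odd #|X| by rewrite -(odd_cut cubic_G) cutX6.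
pose barrier (S : {set V}) :=
  (S \subset X) && (#|S| + 2 <= #|odd_comps (adjacent src tgt) (X :\: S)|).
have [S0 S0X leS0] := tutte_barrier adj_sym evX (fun m => no_pm (matchable_perfect m)).
have barrier_S0 : barrier S0 by apply/andP.
case: (@arg_maxnP _ S0 barrier (fun S => #|S|) barrier_S0) => S /andP[SX leSO] maxS.
have all_odd : {in components src tgt (X :\: S), forall L : {set V}, odd #|L|}.
  by apply: maximal_barrier_odd => // S' S'X leS'; apply/maxS/andP.
have [eO cut3 ind deg] := tight_barrier cubic_G bridgeless_G cutX6 SX leSO.
exists S; split=> //; split=> // L LY.
by apply: cut3; rewrite inE LY all_odd.
Qed.
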